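(* Let $\phi:[0,1]\to\mathbb R$ be H\''older continuous with exponent $\gamma\in(0,1]$, $\phi(0)=\phi(1)$, and suppose $\phi$ is a valid base function for $b\in\{2,3,\dots\}$ and $\alpha\in(b^{-\gamma},1)$. If $0<\beta<b^{-\gamma}$, then $\psi(t):=\sum_{m=0}^\infty\beta^m\phi(\{b^mt\})$, $t\in[0,1]$, is also a valid base function for $b$ and $\alpha$.
   Context: $\{x\}$ denotes the fractional part of $x\ge0$. $U_1,U_2,\dots$ are i.i.d. uniform on $\{0,1,\dots,b-1\}$ and $R_m:=\sum_{i=1}^mU_ib^{i-1}$. Definition: a function $\phi:[0,1]\to\mathbb R$ that is H\''older continuous with exponent $\gamma\in(0,1]$ and satisfies $\phi(0)=\phi(1)$ is called a valid base function for $b$ and $\alpha$ (where $\alpha b^\gamma>1$, $\alpha<1$) if the random variable $Z:=\sum_{m=1}^\infty\alpha^{-m}\big(\phi((R_m+1)b^{-m})-\phi(R_mb^{-m})\big)$ is not almost surely equal to $0$. *)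

From HB Require Import structures.
From mathcomp Require Import all_boot all_order all_algebra.
From mathcomp Require Import all_classical all_reals all_analysis.
Set Implicit Arguments. Unset Strict Implicit. Unset Printing Implicit Defensive.
Import Order.TTheory GRing.Theory Num.Theory.
Import numFieldNormedType.Exports.
Local Open Scope classical_set_scope.
Local Open Scope ring_scope.

Section Defs.
Variable R : realType.

Definition frac (x : R) : R := x - (Num.floor x)%:~R.

Definition holder_on01 (gamma : R) (phi : R -> R) : Prop :=
  exists C : R, forall s t : R, 0 <= s <= 1 -> 0 <= t <= 1 ->
    `|phi s - phi t| <= C * (`|s - t| `^ gamma).

Definition psi_of (b : nat) (beta : R) (phi : R -> R) (t : R) : R :=
  limn (series (fun m : nat => beta ^+ m * phi (frac ((b%:R) ^+ m * t)))).

Variables (d : measure_display) (T : measurableType d) (P : probability T R).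

(* U_0, U_1, ... i.i.d. uniform on {0,...,b-1}: each event {U i = k} is
   measurable, each U i is uniform, and the family is mutually independent
   (product rule over every finite family of distinct indices). *)
Definition iid_uniform (b : nat) (U : nat -> T -> nat) : Prop :=
  (forall i k, measurable [set w | U i w = k]) /\
  (forall i k, (k < b)%N -> P [set w | U i w = k] = (b%:R^-1)%:E) /\
  (forall (s : seq nat) (k : nat -> nat), uniq s ->
     P (\bigcap_(i in [set` s]) [set w | U i w = k i]) =
     (\prod_(i <- s) P [set w | U i w = k i])%E).

(* R_m = sum_{i=1}^m U_i b^(i-1), written with 0-indexed U *)
Definition Rm (b : nat) (U : nat -> T -> nat) (m : nat) (w : T) : nat :=
  (\sum_(i < m) U i w * b ^ i)%N.

Definition Zvar (b : nat) (alpha : R) (phi : R -> R) (U : nat -> T -> nat)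
  (w : T) : R :=
  limn (series (fun n : nat =>
    let m := n.+1 in
    alpha ^- m * (phi ((Rm b U m w).+1%:R / (b%:R ^+ m))
                  - phi ((Rm b U m w)%:R / (b%:R ^+ m))))).

Definition valid_base_function (b : nat) (alpha gamma : R) (phi : R -> R)
  (U : nat -> T -> nat) : Prop :=
  holder_on01 gamma phi /\ phi 0 = phi 1 /\
  ~ {ae P, forall w, Zvar b alpha phi U w = 0}.

End Defs.

(* For a digit sequence v write N_m = sum_(i<m) v_i b^i and let
   D_m(f) = f({(N_m + 1)/b^m}) - f({N_m/b^m}) be the increment of f over the
   m-th b-adic interval selected by v.  Multiplying by b^k maps the endpoints
   of that interval to the endpoints of the interval of level m - k, up to an
   integer, and to integers when k >= m; hence D_m(psi) = sum_(k<m) beta^k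
   D_(m-k)(phi).  The series defining Z for psi is therefore the Cauchy
   product of the one for phi with the geometric series of ratio
   beta/alpha < 1, so Z_psi = Z_phi / (1 - beta/alpha) whenever every digit
   is < b, which holds almost surely.  Thus Z_psi = 0 a.s. would force
   Z_phi = 0 a.s.  Hoelder continuity of psi comes from the 1-periodic
   extension t |-> phi({t}) being Hoelder with constant 2C. *)
From Pilot Require Import Defs.
From HB Require Import structures.
From mathcomp Require Import all_boot all_order all_algebra.
From mathcomp Require Import all_classical all_reals all_analysis.
From mathcomp Require Import ring lra.
Import Order.TTheory GRing.Theory Num.Theory.
Import numFieldNormedType.Exports.
Local Open Scope classical_set_scope.
Local Open Scope ring_scope.
Set Implicit Arguments. Unset Strict Implicit. Unset Printing Implicit Defensive.

Section SeriesFacts.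
Variable R : realType.

Lemma series_geometric_bound (u : R^nat) (c q : R) : 0 <= q < 1 ->
  (forall n, `|u n| <= c * q ^+ n) ->
  cvgn (series u) /\ `|limn (series u)| <= c / (1 - q).
Proof.
move=> /andP[q0 q1] hu.
have aq : `|q| < 1 by rewrite ger0_norm.
have geom_cvg := @is_cvg_geometric_series _ c _ aq.
have norm_cvg : cvgn [normed series u].
  apply: (series_le_cvg _ _ _ geom_cvg) => n //=; rewrite /geometric /=.
  exact: le_trans (hu n).
split; first exact: normed_cvg.
apply: le_trans (lim_series_norm norm_cvg) _.
rewrite -(cvg_lim _ (@cvg_geometric_series _ c _ aq)) //.
by apply: lim_series_le => // n; rewrite /geometric /=.
Qed.

(* A solution of e_(n+1) = r e_n + z_n with 0 < r < 1 tends to 0 when the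
   perturbation z_n does: if |z_n| <= eps (1 - r)/2 for n >= N, then
   |e_n| <= r^(n-N) |e_N| + eps/2 for n >= N. *)
Lemma linear_recursion_cvg0 (e z : R^nat) (r : R) : 0 < r < 1 ->
  (forall n, e n.+1 = r * e n + z n) -> z @ \oo --> 0 -> e @ \oo --> 0.
Proof.
move=> /andP[r0 r1] he hz.
apply/cvgr0Pnorm_lt => eps eps0.
have eps' : 0 < eps * (1 - r) / 2 by rewrite divr_gt0 // mulr_gt0 // subr_gt0.
have [N0 _ small_z] := cvgr0_norm_lt z hz _ eps'.
pose B := `|e N0| / r ^+ N0.
have tail_bound k : `|e (N0 + k)%N| <= B * r ^+ (N0 + k) + eps / 2.
  elim: k => [|k IH].
    rewrite addn0 /B divfK ?expf_neq0 ?gt_eqF //.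
    by rewrite lerDl divr_ge0 // ltW.
  rewrite addnS he; apply: le_trans (ler_normD _ _) _.
  have zk : `|z (N0 + k)%N| <= eps * (1 - r) / 2.
    by apply/ltW/small_z => /=; rewrite leq_addr.
  rewrite normrM (ger0_norm (ltW r0)).
  apply: le_trans (lerD (ler_wpM2l (ltW r0) IH) zk) _.
  by rewrite exprS le_eqVlt; apply/orP; left; apply/eqP; field.
have ar : `|r| < 1 by rewrite ger0_norm // ltW.
have eps2 : 0 < eps / 2 by rewrite divr_gt0.
have [N1 _ small_geom] := cvgr0_norm_lt _ (@cvg_geometric _ B _ ar) _ eps2.
exists (maxn N0 N1) => // n /= hn.
have n0 : (N0 <= n)%N by apply: leq_trans hn; rewrite leq_maxl.
have n1 : (N1 <= n)%N by apply: leq_trans hn; rewrite leq_maxr.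
have := tail_bound (n - N0)%N; rewrite subnKC // => en.
have Brn : B * r ^+ n < eps / 2.
  by apply: le_lt_trans (small_geom n n1); exact: ler_norm.
apply: le_lt_trans en _; lra.
Qed.

Lemma series_geometric_convolution (a : R^nat) (r A : R) : 0 < r < 1 ->
  series a @ \oo --> A ->
  series (fun n => \sum_(k < n.+1) r ^+ k * a (n - k)%N) @ \oo --> A / (1 - r).
Proof.
move=> /andP[r0 r1] ha.
set c := fun n => _.
have c_rec n : c n.+1 = a n.+1 + r * c n.
  rewrite /c big_ord_recl /= expr0 mul1r subn0; congr (_ + _).
  rewrite mulr_sumr; apply: eq_bigr => k _.
  by rewrite /bump /= add1n subSS exprS mulrA.
have sum_rec N : series c N.+1 = r * series c N + series a N.+1.
  elim: N => [|N IH].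
    by rewrite !seriesSr /series /= !big_geq // /c big_ord1 mulr0 !add0r expr0 mul1r.
  by rewrite (seriesSr c N.+1) {1}IH c_rec (seriesSr a N.+1) (seriesSr c N); ring.
have r1' : 1 - r != 0 by rewrite subr_eq0 gt_eqF.
apply/subr_cvg0.
apply: (@linear_recursion_cvg0 _ (fun N => series a N.+1 - A) r); first by rewrite r0 r1.
  by move=> n /=; rewrite sum_rec; field.
by apply/subr_cvg0; rewrite (cvg_shiftS (series a)).
Qed.

End SeriesFacts.

Section FractionalPart.
Variable R : realType.
Implicit Types x : R.

Lemma frac_ge0 x : 0 <= Defs.frac x.
Proof. by rewrite /Defs.frac subr_ge0 floor_le. Qed.

Lemma frac_lt1 x : Defs.frac x < 1.
Proof. by rewrite /Defs.frac; have := floorD1_gt x; rewrite intrD /=; lra. Qed.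

Lemma frac_in01 x : 0 <= Defs.frac x <= 1.
Proof. by rewrite frac_ge0 ltW // frac_lt1. Qed.

Lemma frac_addn x (n : nat) : Defs.frac (x + n%:R) = Defs.frac x.
Proof.
rewrite /Defs.frac floorDrz ?intr_int //.
have -> : Num.floor (n%:R : R) = n%:Z.
  by rewrite -[X in Num.floor X]/((n%:Z)%:~R) intrKfloor.
by rewrite intrD /=; ring.
Qed.

Lemma frac_id x : 0 <= x < 1 -> Defs.frac x = x.
Proof. by move=> hx; rewrite /Defs.frac (@floor_def _ x 0) ?subr0. Qed.

Lemma frac_nat (n : nat) : Defs.frac (n%:R : R) = 0.
Proof. by rewrite -[X in Defs.frac X]add0r frac_addn frac_id // lexx ltr01. Qed.

Lemma frac_gap x y : Num.floor x < Num.floor y ->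
  1 - Defs.frac x <= y - x /\ Defs.frac y <= y - x.
Proof.
move=> lt_floor.
have next_int : (Num.floor x)%:~R + 1 <= (Num.floor y)%:~R :> R.
  by rewrite -[1]/(1%:~R) -intrD ler_int lezD1.
have := floor_le y; have := floorD1_gt x; rewrite intrD /= /Defs.frac => *.
split; lra.
Qed.

Lemma frac_badic (b N j : nat) : (0 < b)%N -> (N < b ^ j)%N ->
  Defs.frac (N%:R / (b%:R : R) ^+ j) = N%:R / b%:R ^+ j.
Proof.
move=> b0 Nlt; have bj : (0 : R) < b%:R ^+ j by rewrite exprn_gt0 // ltr0n.
apply: frac_id; rewrite divr_ge0 ?ler0n ?ltW //=.
by rewrite ltr_pdivrMr // mul1r -natrX ltr_nat.
Qed.

End FractionalPart.

Section BadicNumbers.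
Variable R : realType.

(* The integer N_m = sum_(i<m) v_i b^i encoded by the first m digits of v;
   it is the quantity R_m of the paper for the digit sequence i |-> U_i w. *)
Definition badic_num (b : nat) (v : nat -> nat) (m : nat) : nat :=
  (\sum_(i < m) v i * b ^ i)%N.

Lemma badic_numD b v j k :
  badic_num b v (j + k) = (badic_num b v j + b ^ j * \sum_(i < k) v (j + i) * b ^ i)%N.
Proof.
rewrite /badic_num big_split_ord /=; congr (_ + _)%N.
by rewrite big_distrr /=; apply: eq_bigr => i _; rewrite expnD mulnCA.
Qed.

Lemma badic_num_lt b v j : (forall i, (v i < b)%N) -> (badic_num b v j < b ^ j)%N.
Proof.
move=> hv; elim: j => [|j IH]; first by rewrite /badic_num big_ord0 expn0.
rewrite /badic_num big_ord_recr /= -/(badic_num b v j) expnS.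
apply: leq_trans (_ : (badic_num b v j + v j * b ^ j < b ^ j + v j * b ^ j)%N) _.
  by rewrite ltn_add2r.
by rewrite -mulSn leq_mul2r hv orbT.
Qed.

Lemma frac_scale_badic (b : nat) v j k e : (0 < b)%N ->
  Defs.frac ((b%:R : R) ^+ k * ((badic_num b v (j + k) + e)%:R / b%:R ^+ (j + k))) =
  Defs.frac ((badic_num b v j + e)%:R / b%:R ^+ j).
Proof.
move=> b0; rewrite badic_numD.
set N := (\sum_(i < k) _)%N.
have bn0 : (b%:R : R) != 0 by rewrite pnatr_eq0 -lt0n.
have -> : (b%:R : R) ^+ k * ((badic_num b v j + b ^ j * N + e)%:R / b%:R ^+ (j + k)) =
    (badic_num b v j + e)%:R / b%:R ^+ j + N%:R.
  by rewrite !natrD natrM natrX exprD; field; rewrite !expf_neq0.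
by rewrite frac_addn.
Qed.

Lemma frac_scale_int (b X m i : nat) : (0 < b)%N ->
  Defs.frac ((b%:R : R) ^+ (m + i) * (X%:R / b%:R ^+ m)) = 0.
Proof.
move=> b0; have bn0 : (b%:R : R) != 0 by rewrite pnatr_eq0 -lt0n.
have -> : (b%:R : R) ^+ (m + i) * (X%:R / b%:R ^+ m) = (X * b ^ i)%N%:R.
  by rewrite natrM natrX exprD; field; rewrite expf_neq0.
exact: frac_nat.
Qed.

End BadicNumbers.

Section PowerFacts.
Variable R : realType.

Lemma powR_le (a c g : R) : 0 <= g -> 0 <= a -> a <= c -> a `^ g <= c `^ g.
Proof.
by move=> g0 a0 ac; apply: (ge0_ler_powR g0); rewrite ?nnegrE //; apply: le_trans ac.
Qed.

Lemma powR_exprn (x g : R) (k : nat) : 0 <= x -> (x ^+ k) `^ g = (x `^ g) ^+ k.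
Proof.
move=> x0; rewrite -powR_mulrn // -powRrM mulrC powRrM powR_mulrn //.
exact: powR_ge0.
Qed.

Lemma powR_invl (x g : R) : 0 < x -> x^-1 `^ g = x `^ (- g).
Proof.
move=> x0; have xg0 : x `^ g != 0 by rewrite gt_eqF // powR_gt0.
rewrite powRN; apply: (mulIf xg0).
by rewrite -powRM ?invr_ge0 ?ltW // mulVf ?gt_eqF // powR1 mulVf.
Qed.

End PowerFacts.

Definition holder_const (R : realType) (C g : R) (phi : R -> R) : Prop :=
  forall s t : R, 0 <= s <= 1 -> 0 <= t <= 1 -> `|phi s - phi t| <= C * `|s - t| `^ g.

Definition badic_incr (R : realType) (phi : R -> R) (b : nat) (v : nat -> nat)
    (j : nat) : R :=
  phi (Defs.frac ((badic_num b v j).+1%:R / (b%:R) ^+ j)) -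
  phi (Defs.frac ((badic_num b v j)%:R / (b%:R) ^+ j)).

(* psi(0) = psi(1), since b^m * 0 and b^m * 1 are both integers. *)
Lemma psi_periodic (R : realType) (b : nat) (beta : R) (phi : R -> R) :
  psi_of b beta phi 0 = psi_of b beta phi 1.
Proof.
rewrite /psi_of; congr (limn (series _)); apply: funext => m.
by rewrite mulr0 mulr1 -natrX frac_nat frac_id // lexx ltr01.
Qed.

Section HolderBaseFunction.
Variables (R : realType) (phi : R -> R) (C g : R).
Hypotheses (g_gt0 : 0 < g) (phi_holder : holder_const C g phi).

Let in01_0 : 0 <= (0 : R) <= 1. Proof. by rewrite lexx ler01. Qed.
Let in01_1 : 0 <= (1 : R) <= 1. Proof. by rewrite lexx ler01. Qed.

Lemma holder_const_ge0 : 0 <= C.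
Proof.
have := phi_holder in01_0 in01_1; rewrite sub0r normrN normr1 powR1 mulr1.
exact: le_trans (normr_ge0 _).
Qed.

Lemma phi_frac_bounded y : `|phi (Defs.frac y)| <= `|phi 0| + C.
Proof.
have dist0 : `|Defs.frac y - 0| `^ g <= 1.
  have := @powR_le _ `|Defs.frac y - 0| 1 g (ltW g_gt0) (normr_ge0 _).
  rewrite powR1 subr0 ger0_norm ?frac_ge0 //; apply; exact/ltW/frac_lt1.
have := ler_wpM2l holder_const_ge0 dist0; rewrite mulr1 => C_bound.
have incr := phi_holder (frac_in01 y) in01_0.
rewrite -[phi (Defs.frac y)](subrK (phi 0)).
apply: le_trans (ler_normD _ _) _; rewrite addrC lerD2l.
exact: le_trans incr C_bound.
Qed.

Hypothesis phi01 : phi 0 = phi 1.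

(* Since phi 0 = phi 1, the periodic extension t |-> phi({t}) is Hoelder on
   the whole line with constant 2C: if x <= y straddle an integer, split the
   increment at that integer. *)
Lemma phi_frac_holder x y :
  `|phi (Defs.frac x) - phi (Defs.frac y)| <= 2 * C * `|x - y| `^ g.
Proof.
have C0 := holder_const_ge0.
wlog xy : x y / x <= y.
  move=> H; have [|/ltW yx] := leP x y; first exact: H.
  by rewrite distrC (distrC x); apply: H.
have := le_floor xy; rewrite le_eqVlt => /orP[/eqP same_floor|lt_floor].
  apply: le_trans (phi_holder (frac_in01 x) (frac_in01 y)) _.
  have -> : Defs.frac x - Defs.frac y = x - y by rewrite /Defs.frac same_floor; ring.
  have : 0 <= C * `|x - y| `^ g by rewrite mulr_ge0 // powR_ge0.
  lra.
have [gap_x gap_y] := frac_gap lt_floor.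
have dist_xy : `|x - y| = y - x by rewrite distrC ger0_norm // subr_ge0.
have bound_x : `|phi (Defs.frac x) - phi 1| <= C * `|x - y| `^ g.
  apply: le_trans (phi_holder (frac_in01 x) in01_1) (ler_wpM2l C0 _).
  apply: powR_le (ltW g_gt0) (normr_ge0 _) _.
  by rewrite distrC ger0_norm ?dist_xy // subr_ge0 ltW // frac_lt1.
have bound_y : `|phi 0 - phi (Defs.frac y)| <= C * `|x - y| `^ g.
  apply: le_trans (phi_holder in01_0 (frac_in01 y)) (ler_wpM2l C0 _).
  apply: powR_le (ltW g_gt0) (normr_ge0 _) _.
  by rewrite sub0r normrN ger0_norm ?frac_ge0 ?dist_xy.
have -> : phi (Defs.frac x) - phi (Defs.frac y) =
    (phi (Defs.frac x) - phi 1) + (phi 0 - phi (Defs.frac y)) by rewrite phi01; ring.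
apply: le_trans (ler_normD _ _) _; lra.
Qed.

(* For admissible digits the b-adic points N_j/b^j, (N_j+1)/b^j lie in
   [0, 1], and phi 0 = phi 1 lets us drop the fractional parts. *)
Lemma badic_incr_digits (b : nat) v j : (0 < b)%N -> (forall i, (v i < b)%N) ->
  badic_incr phi b v j =
  phi ((badic_num b v j).+1%:R / (b%:R) ^+ j) - phi ((badic_num b v j)%:R / (b%:R) ^+ j).
Proof.
move=> b0 hv; have Nlt := badic_num_lt j hv.
rewrite /badic_incr [Defs.frac (_%:R / _) in X in _ - X]frac_badic //.
move: Nlt; rewrite leq_eqVlt => /orP[/eqP last_int|Nlt]; last by rewrite frac_badic.
have bj : (b%:R : R) ^+ j != 0 by rewrite expf_neq0 // pnatr_eq0 -lt0n.
by rewrite last_int natrX divff // -[X in Defs.frac X]/(1%:R) frac_nat phi01.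
Qed.

Lemma badic_incr_bound (b : nat) v j : (0 < b)%N ->
  `|badic_incr phi b v j| <= 2 * C * ((b%:R : R)^-1 `^ g) ^+ j.
Proof.
move=> b0; apply: le_trans (phi_frac_holder _ _) _.
have bj : (b%:R : R) ^+ j != 0 by rewrite expf_neq0 // pnatr_eq0 -lt0n.
have -> : (badic_num b v j).+1%:R / (b%:R : R) ^+ j - (badic_num b v j)%:R / b%:R ^+ j =
    (b%:R^-1) ^+ j by rewrite -natr1 exprVn; field.
by rewrite ger0_norm ?exprn_ge0 ?invr_ge0 ?ler0n // powR_exprn ?invr_ge0 ?ler0n.
Qed.

Section Psi.
Variables (b : nat) (beta : R).
Hypothesis beta01 : 0 <= beta < 1.

(* The series defining psi converges, being dominated by (|phi 0| + C) beta^m. *)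
Lemma psi_series_cvg t :
  cvgn (series (fun m : nat => beta ^+ m * phi (Defs.frac ((b%:R) ^+ m * t)))).
Proof.
have [beta0 _] := andP beta01.
apply: (proj1 (@series_geometric_bound _ _ (`|phi 0| + C) beta beta01 _)) => m.
rewrite normrM ger0_norm ?exprn_ge0 // mulrC.
by apply: ler_wpM2r; [exact: exprn_ge0 | exact: phi_frac_bounded].
Qed.

(* psi is Hoelder with exponent g when beta b^g < 1: the m-th terms of
   psi s - psi t are bounded by 2C |s - t|^g (beta b^g)^m. *)
Lemma psi_holder : beta * b%:R `^ g < 1 ->
  holder_const (2 * C / (1 - beta * b%:R `^ g)) g (psi_of b beta phi).
Proof.
move=> q1; set q := beta * b%:R `^ g.
have [beta0 _] := andP beta01.
have q01 : 0 <= q < 1 by rewrite mulr_ge0 ?powR_ge0.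
move=> s t _ _.
rewrite /psi_of -lim_seriesB; [|exact: psi_series_cvg|exact: psi_series_cvg].
have := @series_geometric_bound _ (fun m : nat =>
    beta ^+ m * phi (Defs.frac ((b%:R) ^+ m * s)) -
    beta ^+ m * phi (Defs.frac ((b%:R) ^+ m * t))) (2 * C * `|s - t| `^ g) q q01.
case.
  move=> n /=; rewrite -mulrBr normrM ger0_norm ?exprn_ge0 //.
  apply: le_trans (ler_wpM2l (exprn_ge0 _ beta0) (phi_frac_holder _ _)) _.
  rewrite -mulrBr normrM ger0_norm ?exprn_ge0 // powRM ?exprn_ge0 ?normr_ge0 //.
  by rewrite powR_exprn // /q exprMn le_eqVlt; apply/orP; left; apply/eqP; ring.
move=> _ sum_bound; apply: le_trans sum_bound _.
rewrite le_eqVlt; apply/orP; left; apply/eqP; field.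
by rewrite subr_eq0 gt_eqF.
Qed.

Hypothesis b_gt0 : (0 < b)%N.

(* The b-adic increment of psi at level m is sum_(k<m) beta^k D_(m-k)(phi):
   the terms of index k >= m cancel since b^k maps both endpoints to
   integers. *)
Lemma psi_badic_incr v m :
  psi_of b beta phi ((badic_num b v m).+1%:R / (b%:R) ^+ m) -
  psi_of b beta phi ((badic_num b v m)%:R / (b%:R) ^+ m) =
  \sum_(k < m) beta ^+ k * badic_incr phi b v (m - k).
Proof.
rewrite /psi_of -lim_seriesB; [|exact: psi_series_cvg|exact: psi_series_cvg].
apply: lim_near_cst; first exact: Rhausdorff.
exists m => // N /= mN.
rewrite /series /= (big_cat_nat (leq0n m) mN) /=.
rewrite [X in _ + X]big1_seq ?addr0; last first.
  move=> k /andP[_]; rewrite mem_index_iota => /andP[mk _].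
  by rewrite -(subnKC mk) 2!fctE !frac_scale_int // subrr.
rewrite big_mkord; apply: eq_bigr => [[k km]] _ /=.
have [j ->] : exists j, m = (j + k)%N by exists (m - k)%N; rewrite subnK // ltnW.
rewrite addnK 2!fctE /badic_incr -[(badic_num b v (j + k)).+1]addn1.
rewrite -[(badic_num b v j).+1]addn1 frac_scale_badic //.
by have := @frac_scale_badic R b v j k 0 b_gt0; rewrite !addn0 => ->; rewrite mulrBr.
Qed.

Section Zseries.
Variable alpha : R.
Hypotheses (alpha_gt : (b%:R^-1) `^ g < alpha) (beta_gt0 : 0 < beta).
Hypothesis beta_alpha : beta < alpha.

Let alpha_gt0 : 0 < alpha.
Proof. by apply: le_lt_trans alpha_gt; exact: powR_ge0. Qed.

Lemma scaled_incr_bound v n :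
  `|alpha ^- n.+1 * badic_incr phi b v n.+1| <=
    (2 * C * (b%:R^-1) `^ g / alpha) * (((b%:R^-1) `^ g) / alpha) ^+ n.
Proof.
rewrite normrM normrV ?unitfE ?expf_neq0 ?gt_eqF // normrX (ger0_norm (ltW alpha_gt0)).
apply: le_trans (ler_wpM2l _ (badic_incr_bound v n.+1 b_gt0)) _.
  by rewrite invr_ge0 exprn_ge0 // ltW.
rewrite le_eqVlt; apply/orP; left; apply/eqP.
by rewrite !exprS exprMn exprVn; field; rewrite expf_neq0 // gt_eqF.
Qed.

Lemma Zphi_series_cvg v : cvgn (series (fun n => alpha ^- n.+1 * badic_incr phi b v n.+1)).
Proof.
have ratio01 : 0 <= (b%:R^-1) `^ g / alpha < 1.
  by rewrite divr_ge0 ?powR_ge0 ?ltW //= ltr_pdivrMr // mul1r.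
exact: (proj1 (series_geometric_bound ratio01 (scaled_incr_bound v))).
Qed.

Lemma psi_scaled_incr v n :
  alpha ^- n.+1 * (psi_of b beta phi ((badic_num b v n.+1).+1%:R / (b%:R) ^+ n.+1) -
    psi_of b beta phi ((badic_num b v n.+1)%:R / (b%:R) ^+ n.+1)) =
  \sum_(k < n.+1) (beta / alpha) ^+ k * (alpha ^- (n - k).+1 * badic_incr phi b v (n - k).+1).
Proof.
rewrite psi_badic_incr mulr_sumr; apply: eq_bigr => [[k kn]] _ /=.
rewrite subSn //.
have [j ->] : exists j, n = (k + j)%N by exists (n - k)%N; rewrite subnKC.
rewrite addKn exprMn exprVn -addnS exprD invfM.
by set A := alpha ^+ k; set B := alpha ^+ j.+1; set E := badic_incr phi b v j.+1; ring.
Qed.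

Lemma Zvar_psi (d : measure_display) (T : measurableType d) (U : nat -> T -> nat) w :
  (forall i, (U i w < b)%N) ->
  Zvar b alpha (psi_of b beta phi) U w = Zvar b alpha phi U w / (1 - beta / alpha).
Proof.
move=> digits; set v := U^~ w.
have ratio01 : 0 < beta / alpha < 1 by rewrite divr_gt0 //= ltr_pdivrMr // mul1r.
have -> : Zvar b alpha phi U w =
    limn (series (fun n => alpha ^- n.+1 * badic_incr phi b v n.+1)).
  rewrite /Zvar; congr (limn (series _)); apply: funext => n /=.
  by rewrite badic_incr_digits //; exact: digits.
have -> : Zvar b alpha (psi_of b beta phi) U w = limn (series (fun n =>
    \sum_(k < n.+1) (beta / alpha) ^+ k * (alpha ^- (n - k).+1 * badic_incr phi b v (n - k).+1))).
  rewrite /Zvar; congr (limn (series _)); apply: funext => n /=.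
  exact: psi_scaled_incr.
apply: cvg_lim; first exact: Rhausdorff.
exact: (@series_geometric_convolution _
  (fun i => alpha ^- i.+1 * badic_incr phi b v i.+1) _ _ ratio01 (@Zphi_series_cvg v)).
Qed.

End Zseries.
End Psi.
End HolderBaseFunction.

(* Almost surely every digit U_i lies in {0, ..., b-1}: for each i the
   events {U_i = k}, k < b, are disjoint of total probability 1. *)
Lemma ae_digits_lt (R : realType) d (T : measurableType d) (P : probability T R)
    (b : nat) (U : nat -> T -> nat) :
  (0 < b)%N -> iid_uniform P b U -> {ae P, forall w, forall i, (U i w < b)%N}.
Proof.
move=> b0 [meas [unif _]].
pose bad i := ~` (\big[setU/set0]_(k < b) [set w | U i w = k]).
have union_meas i : measurable (\big[setU/set0]_(k < b) [set w | U i w = k]).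
  by apply: bigsetU_measurable => k _; exact: meas.
apply: (@negligibleS _ _ _ P (\bigcup_i bad i)).
  move=> w /= /existsNP[i Ui]; exists i => // Ui_lt; apply: Ui.
  move: Ui_lt; rewrite /= -(bigcup_mkord b (fun k : nat => [set w0 | U i w0 = k])).
  by case=> k /= kb ->.
apply: negligible_bigcup => i; exists (bad i); split => //; first exact: measurableC.
rewrite /bad /= probability_setC //.
rewrite (@measure_semi_additive_ord_I _ _ _ P (fun k => [set w | U i w = k])) //.
- rewrite (eq_bigr (fun=> ((b%:R : R)^-1)%:E)); last by move=> k _; rewrite /= unif.
  rewrite sumEFin -(big_mkord xpredT (fun=> (b%:R : R)^-1)) sumr_const_nat subn0.
  by rewrite -[(b%:R : R)^-1 *+ b]mulr_natr mulVf ?pnatr_eq0 -?lt0n // -EFinB subrr.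
- by move=> k l _ _ [w [/= <- <-]].
Qed.

Unset Implicit Arguments.

Theorem propositionA4 (R : realType) (d : measure_display) (T : measurableType d)
  (P : probability T R) (U : nat -> T -> nat) (b : nat) (alpha beta gamma : R)
  (phi : R -> R) :
  (2 <= b)%N ->
  0 < gamma <= 1 ->
  b%:R `^ (- gamma) < alpha -> alpha < 1 ->
  iid_uniform P b U ->
  holder_on01 gamma phi ->
  phi 0 = phi 1 ->
  valid_base_function P b alpha gamma phi U ->
  0 < beta -> beta < b%:R `^ (- gamma) ->
  valid_base_function P b alpha gamma (psi_of b beta phi) U.
Proof.
move=> b2 /andP[gamma_gt0 _] b_alpha alpha1 iidU [C phi_holder] phi01
  [_ [_ Zphi_not0]] beta_gt0 beta_b.
have b_gt0 : (0 < b)%N by apply: leq_trans b2.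
have bR_gt0 : (0 : R) < b%:R by rewrite ltr0n.
have binv_alpha : (b%:R^-1) `^ gamma < alpha by rewrite powR_invl.
have beta_alpha : beta < alpha := lt_trans beta_b b_alpha.
have beta01 : 0 <= beta < 1 by rewrite ltW //= (lt_trans beta_alpha).
have alpha_gt0 : 0 < alpha by apply: le_lt_trans binv_alpha; exact: powR_ge0.
have ratio_ne1 : 1 - beta / alpha != 0.
  by rewrite subr_eq0 eq_sym lt_eqF // ltr_pdivrMr // mul1r.
split.
  exists (2 * C / (1 - beta * b%:R `^ gamma)); apply: psi_holder => //.
  by rewrite -ltr_pdivlMr ?powR_gt0 // div1r -powRN.
split; first exact: psi_periodic.
move=> Zpsi0; apply: Zphi_not0.
apply: filterS2 (ae_digits_lt b_gt0 iidU) Zpsi0 => w digits.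
rewrite (Zvar_psi gamma_gt0 phi_holder phi01 beta01 b_gt0 binv_alpha beta_gt0 beta_alpha) //.
by move/eqP; rewrite mulf_eq0 invr_eq0 (negbTE ratio_ne1) orbF => /eqP.
Qed.
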